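(* Let $a>0$ and let $Y^{(1)},Y^{(2)}$ be independent $\chi^2_1$ random variables. Then the cdf $H(u)=P(Y^{(1)}+aY^{(2)}\le u)$ is concave on $(0,\infty)$. *)

From Stdlib Require Import Reals ClassicalEpsilon.
Open Scope R_scope.

(* Riemann integral of f over [a,b] (oriented), defined to be 0 when f is not
   Riemann integrable there.  RiemannInt is proof-irrelevant, so the choice of
   integrability witness does not matter. *)
Definition RInt (f : R -> R) (a b : R) : R :=
  match excluded_middle_informative
          (exists pr : Riemann_integrable f a b, True) with
  | left H => RiemannInt (proj1_sig (constructive_indefinite_description _ H))
  | right _ => 0
  end.

Definition phi (z : R) : R := exp (- (z ^ 2) / 2) / sqrt (2 * PI).

(* cdf of a chi^2_1 variable Y = Z^2, Z standard normal:
   P(Y <= v) = P(-sqrt v <= Z <= sqrt v)  (= 0 for v <= 0 since sqrt v = 0). *)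
Definition chi1_cdf (v : R) : R := RInt phi (- sqrt v) (sqrt v).

(* cdf of Y1 + a Y2, Y1 = Z1^2, Y2 = Z2^2 independent chi^2_1, a > 0:
   H(u) = E[ P(Z1^2 <= u - a Z2^2 | Z2) ]
        = int_{-sqrt(u/a)}^{sqrt(u/a)} phi(z) * chi1_cdf(u - a z^2) dz
   (outside that interval the integrand vanishes). *)
Definition H_cdf (a u : R) : R :=
  RInt (fun z => phi z * chi1_cdf (u - a * z ^ 2)) (- sqrt (u / a)) (sqrt (u / a)).

(* Write H(u) = int_{|z| <= sqrt(u/a)} phi(z) E(sqrt(u - a z^2)) dz, where
   E(r) = int_{-r}^{r} phi is the chi^2_1 cdf evaluated at r^2.  The polar
   substitution z = sqrt(u/a) sin t turns this into H(u) = K(sqrt u) with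
   k = 1/sqrt a and
        K(r) = int_{-pi/2}^{pi/2} r k cos t phi(r k sin t) E(r cos t) dt,
   an integral over a fixed interval.  Differentiating under the integral
   sign and integrating the t-derivative part exactly (its boundary values
   vanish because E(0) = 0) gives K'(r) = 2 r Kd(r) with the mixed kernel
        Kd(r) = int k phi(r k sin t) phi(r cos t) dt,
   hence H'(u) = Kd(sqrt u).  Since phi decreases in |z|, Kd(sqrt u) is
   nonincreasing in u, and a differentiable function with nonincreasing
   derivative is concave (two applications of the mean value theorem). *)

From Pilot Require Import Defs.
From Stdlib Require Import Reals Lra FunctionalExtensionality ClassicalEpsilon.
From Coquelicot Require Import Coquelicot.
Open Scope R_scope.

Lemma Defs_RInt_eq (f : R -> R) a b : ex_RInt f a b -> Defs.RInt f a b = RInt f a b.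
Proof.
  intro Hf. unfold Defs.RInt.
  destruct excluded_middle_informative as [Hex | Hno].
  - symmetry. apply RInt_Reals.
  - exfalso. apply Hno. exists (ex_RInt_Reals_0 _ _ _ Hf). exact I.
Qed.

Lemma continuous_continuity_pt (f : R -> R) x : continuous f x -> continuity_pt f x.
Proof. apply continuity_pt_filterlim. Qed.

Lemma continuous_of_2d (f : R -> R -> R) x y :
  continuity_2d_pt f x y -> continuous (fun t => f x t) y.
Proof.
  intro Hf. apply continuity_pt_filterlim.
  intros eps Heps. destruct (Hf (mkposreal eps Heps)) as [d Hd].
  exists d. split; [apply cond_pos |]. intros t [_ Ht].
  apply (Hd x t); [| exact Ht]. rewrite Rminus_eq_0, Rabs_R0. apply cond_pos.
Qed.

Lemma phi_is_derive x : is_derive phi x (- x * phi x).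
Proof.
  unfold phi. auto_derive; [auto |].
  replace (- (x * (x * 1)) * / 2) with (- x ^ 2 / 2) by (unfold Rdiv; ring).
  replace (- (1 * ((1 + 1) * (x * 1))) * / 2) with (- x) by field.
  unfold Rdiv; ring.
Qed.

Lemma Derive_phi x : Derive phi x = - x * phi x.
Proof. apply is_derive_unique, phi_is_derive. Qed.

Lemma phi_continuous x : continuous phi x.
Proof. apply (ex_derive_continuous (V := R_NormedModule)). eexists. apply phi_is_derive. Qed.

Lemma phi_ex_RInt a b : ex_RInt phi a b.
Proof. apply (ex_RInt_continuous (V := R_CompleteNormedModule)). intros; apply phi_continuous. Qed.

Lemma phi_even x : phi (- x) = phi x.
Proof. unfold phi. replace ((- x) ^ 2) with (x ^ 2) by ring. reflexivity. Qed.

Lemma sqrt_2PI_pos : 0 < sqrt (2 * PI).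
Proof. apply sqrt_lt_R0. pose proof PI_RGT_0. lra. Qed.

Lemma phi_ge0 x : 0 <= phi x.
Proof. unfold phi. apply Rle_mult_inv_pos; [apply Rlt_le, exp_pos | apply sqrt_2PI_pos]. Qed.

Lemma phi_le_of_sq_le p q : q ^ 2 <= p ^ 2 -> phi p <= phi q.
Proof.
  intro Hpq. unfold phi. apply Rmult_le_compat_r.
  - apply Rlt_le, Rinv_0_lt_compat, sqrt_2PI_pos.
  - destruct (Req_dec (q ^ 2) (p ^ 2)) as [-> | Hne]; [lra |].
    apply Rlt_le, exp_increasing. lra.
Qed.

Definition sym_mass (r : R) : R := RInt phi (- r) r.

Lemma chi1_cdf_sym_mass v : chi1_cdf v = sym_mass (sqrt v).
Proof. apply Defs_RInt_eq, phi_ex_RInt. Qed.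

Lemma sym_mass_0 : sym_mass 0 = 0.
Proof. unfold sym_mass. rewrite Ropp_0. apply (RInt_point (V := R_CompleteNormedModule)). Qed.

(* E(r) = Phi0(r) - Phi0(-r) with Phi0 an antiderivative of phi, so E' = 2 phi. *)
Lemma sym_mass_is_derive r : is_derive sym_mass r (2 * phi r).
Proof.
  set (Phi0 := fun x => RInt phi 0 x).
  assert (HPhi0 : forall x, is_derive Phi0 x (phi x)).
  { intro x. apply (is_derive_RInt phi Phi0 0 x).
    - apply filter_forall. intro b.
      apply (RInt_correct (V := R_CompleteNormedModule)), phi_ex_RInt.
    - apply phi_continuous. }
  apply is_derive_ext with (f := fun r => Phi0 r - Phi0 (- r)).
  { intro s. unfold sym_mass, Phi0.
    rewrite <- (RInt_Chasles phi (- s) 0 s) by apply phi_ex_RInt.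
    rewrite <- (opp_RInt_swap phi 0 (- s)) by apply phi_ex_RInt.
    unfold plus, opp; simpl. ring. }
  auto_derive.
  - repeat split; eexists; apply HPhi0.
  - rewrite !(is_derive_unique _ _ _ (HPhi0 _)), phi_even. ring.
Qed.

Lemma Derive_sym_mass r : Derive sym_mass r = 2 * phi r.
Proof. apply is_derive_unique, sym_mass_is_derive. Qed.

Lemma sym_mass_continuous r : continuous sym_mass r.
Proof.
  apply (ex_derive_continuous (V := R_NormedModule)). eexists. apply sym_mass_is_derive.
Qed.

Lemma continuity_pt_phi x : continuity_pt phi x.
Proof. apply continuous_continuity_pt, phi_continuous. Qed.
Lemma continuity_pt_sym_mass x : continuity_pt sym_mass x.
Proof. apply continuous_continuity_pt, sym_mass_continuous. Qed.
Lemma continuity_pt_sqrt x : continuity_pt sqrt x.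
Proof. apply continuous_continuity_pt, continuous_sqrt. Qed.

Ltac continuity_2d := repeat first
  [ apply continuity_2d_pt_id1 | apply continuity_2d_pt_id2 | apply continuity_2d_pt_const
  | apply continuity_1d_2d_pt_comp;
      [ first [ apply continuity_pt_phi | apply continuity_pt_sym_mass
              | apply continuity_pt_sqrt | apply continuity_sin | apply continuity_cos ] |]
  | apply continuity_2d_pt_mult | apply continuity_2d_pt_plus | apply continuity_2d_pt_opp ].

Section Polar.
Variable k : R.

Definition polar_integrand (r t : R) : R :=
  r * k * cos t * phi (r * k * sin t) * sym_mass (r * cos t).

Definition polar_integral (r : R) : R :=
  RInt (fun t => polar_integrand r t) (- (PI / 2)) (PI / 2).

Definition mixed_kernel (r t : R) : R := k * phi (r * k * sin t) * phi (r * cos t).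

Definition mixed_integral (r : R) : R :=
  RInt (fun t => mixed_kernel r t) (- (PI / 2)) (PI / 2).

(* A t-antiderivative accounting for part of the r-derivative of the integrand;
   it vanishes at t = +-pi/2 since sym_mass 0 = 0. *)
Definition boundary_term (r t : R) : R :=
  k * sin t * phi (r * k * sin t) * sym_mass (r * cos t).

Definition boundary_term_dt (r t : R) : R :=
  k * cos t * phi (r * k * sin t) * (1 - (r * k * sin t) * (r * k * sin t))
    * sym_mass (r * cos t)
  - 2 * r * k * (sin t * sin t) * phi (r * k * sin t) * phi (r * cos t).

Definition polar_integrand_dr (r t : R) : R :=
  boundary_term_dt r t + 2 * r * mixed_kernel r t.

Lemma boundary_term_is_derive r t :
  is_derive (fun t => boundary_term r t) t (boundary_term_dt r t).
Proof.
  unfold boundary_term, boundary_term_dt. auto_derive.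
  - repeat split; eexists; first [apply phi_is_derive | apply sym_mass_is_derive].
  - rewrite !Derive_phi, !Derive_sym_mass. ring.
Qed.

Lemma polar_integrand_is_derive r t :
  is_derive (fun r => polar_integrand r t) r (polar_integrand_dr r t).
Proof.
  unfold polar_integrand, polar_integrand_dr, boundary_term_dt, mixed_kernel.
  auto_derive.
  - repeat split; eexists; first [apply phi_is_derive | apply sym_mass_is_derive].
  - rewrite !Derive_phi, !Derive_sym_mass.
    pose proof (sin2_cos2 t) as Hsc. unfold Rsqr in Hsc.
    replace (sin t * sin t) with (1 - cos t * cos t) by lra. ring.
Qed.

Lemma mixed_kernel_ex_RInt r : ex_RInt (fun t => mixed_kernel r t) (- (PI / 2)) (PI / 2).
Proof.
  apply (ex_RInt_continuous (V := R_CompleteNormedModule)). intros t _.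
  apply (continuous_of_2d mixed_kernel). unfold mixed_kernel. continuity_2d.
Qed.

(* The boundary part integrates to zero, leaving K'(r) = 2 r Kd(r). *)
Lemma polar_integral_is_derive r :
  is_derive polar_integral r (2 * r * mixed_integral r).
Proof.
  pose proof polar_integrand_is_derive as Hdr.
  replace (2 * r * mixed_integral r) with
    (RInt (fun t => Derive (fun u => polar_integrand u t) r) (- (PI / 2)) (PI / 2)).
  - apply is_derive_RInt_param.
    + apply filter_forall. intros u t _. eexists. apply Hdr.
    + intros t _. apply continuity_2d_pt_ext with (f := polar_integrand_dr).
      * intros u s. symmetry. apply is_derive_unique, Hdr.
      * unfold polar_integrand_dr, boundary_term_dt, mixed_kernel, Rminus. continuity_2d.
    + apply filter_forall. intro u.
      apply (ex_RInt_continuous (V := R_CompleteNormedModule)). intros t _.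
      apply (continuous_of_2d polar_integrand). unfold polar_integrand. continuity_2d.
  - rewrite (RInt_ext _ (fun t => plus (boundary_term_dt r t) (2 * r * mixed_kernel r t))).
    2: { intros t _. apply is_derive_unique, Hdr. }
    apply is_RInt_unique.
    assert (Hboundary : minus (boundary_term r (PI / 2)) (boundary_term r (- (PI / 2))) = 0).
    { unfold boundary_term. rewrite cos_neg, cos_PI2, !Rmult_0_r, sym_mass_0.
      unfold minus, plus, opp; simpl. ring. }
    replace (2 * r * mixed_integral r)
      with (plus (minus (boundary_term r (PI / 2)) (boundary_term r (- (PI / 2))))
                 (scal (2 * r) (mixed_integral r)))
      by (rewrite Hboundary; unfold plus, scal; simpl; unfold mult; simpl; ring).
    apply (is_RInt_plus (V := R_NormedModule)).
    + apply (is_RInt_derive (V := R_CompleteNormedModule)).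
      * intros t _. apply boundary_term_is_derive.
      * intros t _. apply (continuous_of_2d boundary_term_dt).
        unfold boundary_term_dt, Rminus. continuity_2d.
    + apply (is_RInt_scal (V := R_NormedModule)).
      apply (RInt_correct (V := R_CompleteNormedModule)), mixed_kernel_ex_RInt.
Qed.

(* Chain rule through r = sqrt u: the factor 2 r cancels against 1/(2 sqrt u). *)
Lemma polar_integral_sqrt_is_derive u : 0 < u ->
  is_derive (fun u => polar_integral (sqrt u)) u (mixed_integral (sqrt u)).
Proof.
  intro Hu. assert (Hsu : sqrt u <> 0) by (apply Rgt_not_eq, sqrt_lt_R0, Hu).
  assert (Hsqrt : is_derive (fun x => sqrt x) u (/ (2 * sqrt u))).
  { auto_derive; [exact Hu | field; exact Hsu]. }
  pose proof (is_derive_comp polar_integral (fun x => sqrt x) u _ _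
                (polar_integral_is_derive (sqrt u)) Hsqrt) as Hcomp.
  replace (mixed_integral (sqrt u))
    with (scal (/ (2 * sqrt u)) (2 * sqrt u * mixed_integral (sqrt u))); [exact Hcomp |].
  unfold scal; simpl; unfold mult; simpl. field. exact Hsu.
Qed.

Lemma sq_sqrt_mul_le x y m : 0 < x -> x <= y -> (sqrt x * m) ^ 2 <= (sqrt y * m) ^ 2.
Proof.
  intros Hx Hxy. rewrite !Rpow_mult_distr, !pow2_sqrt by lra.
  apply Rmult_le_compat_r; [apply pow2_ge_0 | exact Hxy].
Qed.

(* Both phi factors of the kernel decrease as r = sqrt u grows. *)
Lemma mixed_integral_sqrt_nonincreasing x y :
  0 <= k -> 0 < x -> x <= y -> mixed_integral (sqrt y) <= mixed_integral (sqrt x).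
Proof.
  intros Hk Hx Hxy. apply RInt_le; try apply mixed_kernel_ex_RInt.
  - pose proof PI_RGT_0. lra.
  - intros t _. unfold mixed_kernel. apply Rmult_le_compat.
    + apply Rmult_le_pos; [exact Hk | apply phi_ge0].
    + apply phi_ge0.
    + apply Rmult_le_compat_l; [exact Hk |].
      rewrite !Rmult_assoc. apply phi_le_of_sq_le, sq_sqrt_mul_le; assumption.
    + apply phi_le_of_sq_le, sq_sqrt_mul_le; assumption.
Qed.

End Polar.

(* Polar substitution z = sqrt(u/a) sin t in the defining integral of H. *)
Lemma H_cdf_polar a u : 0 < a -> 0 < u ->
  H_cdf a u = polar_integral (/ sqrt a) (sqrt u).
Proof.
  intros Ha Hu. unfold H_cdf.
  set (b := sqrt (u / a)).
  set (F := fun z => phi z * sym_mass (sqrt (u - a * (z * z)))).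
  replace (fun z => phi z * chi1_cdf (u - a * z ^ 2)) with F.
  2: { apply functional_extensionality. intro z. unfold F.
       rewrite chi1_cdf_sym_mass. do 3 f_equal. ring. }
  assert (HF : forall z, continuous F z).
  { intro z. apply (continuous_of_2d (fun _ z => phi z * sym_mass (sqrt (u - a * (z * z)))) 0 z).
    unfold Rminus. continuity_2d. }
  rewrite Defs_RInt_eq.
  2: { apply (ex_RInt_continuous (V := R_CompleteNormedModule)). intros; apply HF. }
  assert (Hb : b = sqrt u * / sqrt a) by (apply sqrt_div_alt, Ha).
  assert (Hbb : b * b = u / a) by (apply sqrt_sqrt, Rlt_le, Rdiv_lt_0_compat; assumption).
  replace (- b) with (b * sin (- (PI / 2))) by (rewrite sin_neg, sin_PI2; ring).
  replace b with (b * sin (PI / 2)) at 2 by (rewrite sin_PI2; ring).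
  rewrite <- (RInt_comp F (fun t => b * sin t) (fun t => b * cos t)).
  - apply RInt_ext. intros t Ht.
    rewrite Rmin_left, Rmax_right in Ht by (pose proof PI_RGT_0; lra).
    unfold scal; simpl; unfold mult; simpl. unfold F, polar_integrand.
    assert (Hcos : 0 <= cos t) by (apply cos_ge_0; lra).
    assert (Hrad : u - a * (b * sin t * (b * sin t)) = u * (cos t * cos t)).
    { replace (a * (b * sin t * (b * sin t))) with (a * (b * b) * (sin t * sin t)) by ring.
      rewrite Hbb. pose proof (sin2_cos2 t) as Hsc. unfold Rsqr in Hsc.
      replace (a * (u / a) * (sin t * sin t)) with (u * (sin t * sin t)) by (field; lra).
      replace (cos t * cos t) with (1 - sin t * sin t) by lra. ring. }
    rewrite Hrad, sqrt_mult, sqrt_square by (try apply Rmult_le_pos; lra).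
    rewrite Hb. ring.
  - intros z _. apply HF.
  - intros t _. split.
    + auto_derive; [exact I | ring].
    + apply (ex_derive_continuous (V := R_NormedModule)). auto_derive. exact I.
Qed.

Section ConcaveOfDeriv.
Variables (l : R) (f df : R -> R).
Hypothesis f_is_derive : forall x, l < x -> is_derive f x (df x).
Hypothesis df_nonincreasing : forall x y, l < x -> x <= y -> df y <= df x.

(* For x <= y: the mean value theorem on [x, z] and [z, y], z the convex combination. *)
Lemma concave_of_deriv_le x y t : l < x -> x <= y -> 0 <= t <= 1 ->
  t * f x + (1 - t) * f y <= f (t * x + (1 - t) * y).
Proof.
  intros Hx Hxy Ht. set (z := t * x + (1 - t) * y).
  assert (Hxz : x <= z) by (unfold z; nra).
  assert (Hzy : z <= y) by (unfold z; nra).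
  assert (Hcont : forall w, x <= w <= y -> continuity_pt f w).
  { intros w Hw. apply continuous_continuity_pt, (ex_derive_continuous (V := R_NormedModule)).
    eexists. apply f_is_derive. lra. }
  destruct (MVT_gen f x z df) as [c1 [Hc1 Hmvt1]].
  { intros w Hw. apply f_is_derive. rewrite Rmin_left in Hw by lra. lra. }
  { intros w Hw. rewrite Rmin_left, Rmax_right in Hw by lra. apply Hcont. lra. }
  destruct (MVT_gen f z y df) as [c2 [Hc2 Hmvt2]].
  { intros w Hw. apply f_is_derive. rewrite Rmin_left in Hw by lra. lra. }
  { intros w Hw. rewrite Rmin_left, Rmax_right in Hw by lra. apply Hcont. lra. }
  rewrite Rmin_left, Rmax_right in Hc1, Hc2 by lra.
  assert (Hslopes : df c2 <= df c1) by (apply df_nonincreasing; lra).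
  replace (z - x) with ((1 - t) * (y - x)) in Hmvt1 by (unfold z; ring).
  replace (y - z) with (t * (y - x)) in Hmvt2 by (unfold z; ring).
  assert (Hw : 0 <= t * (1 - t) * (y - x)) by (apply Rmult_le_pos; nra).
  nra.
Qed.

Lemma concave_of_deriv x y t : l < x -> l < y -> 0 <= t <= 1 ->
  t * f x + (1 - t) * f y <= f (t * x + (1 - t) * y).
Proof.
  intros Hx Hy Ht. destruct (Rle_dec x y) as [Hxy | Hyx].
  - exact (concave_of_deriv_le x y t Hx Hxy Ht).
  - pose proof (concave_of_deriv_le y x (1 - t) Hy ltac:(lra) ltac:(lra)) as Hswap.
    replace (1 - (1 - t)) with t in Hswap by ring.
    replace (t * x + (1 - t) * y) with ((1 - t) * y + t * x) by ring. lra.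
Qed.

End ConcaveOfDeriv.

Theorem mainTheorem11 (a : R) (ha : 0 < a) :
  forall x y t : R, 0 < x -> 0 < y -> 0 <= t <= 1 ->
    t * H_cdf a x + (1 - t) * H_cdf a y <= H_cdf a (t * x + (1 - t) * y).
Proof.
  intros x y t Hx Hy Ht.
  assert (Hz : 0 < t * x + (1 - t) * y) by (destruct (Rle_lt_dec t 0); nra).
  assert (Hk : 0 <= / sqrt a) by (apply Rlt_le, Rinv_0_lt_compat, sqrt_lt_R0, ha).
  rewrite !H_cdf_polar by assumption.
  apply (concave_of_deriv 0 (fun u => polar_integral (/ sqrt a) (sqrt u))
           (fun u => mixed_integral (/ sqrt a) (sqrt u))); try assumption.
  - intros u Hu. apply polar_integral_sqrt_is_derive, Hu.
  - intros u v Hu Huv. apply mixed_integral_sqrt_nonincreasing; assumption.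
Qed.
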